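(* Let $\mathcal{X}$ and $\mathcal{Y}$ be finite sets with $2 \le |\mathcal{X}|,|\mathcal{Y}| < \infty$, and let $X,Y$ have joint pmf $P_{X,Y}$ with $P_X(x)>0$ for all $x\in\mathcal{X}$ and $P_Y(y)>0$ for all $y\in\mathcal{Y}$. Let $f:(0,\infty)\to\mathbb{R}$ be convex, strictly convex and thrice differentiable at $1$, with $f(1)=0$ and $f''(1)>0$, such that for every $t\in(0,\infty)$, $$\bigl(f(t)-f'(1)(t-1)\bigr)\left(1-\frac{f'''(1)}{3f''(1)}(t-1)\right)\ge \frac{f''(1)}{2}(t-1)^2 .$$ Suppose further that the function $g:(0,\infty)\to\mathbb{R}$, $g(x)=\frac{f(x)-f(0)}{x}$ with $f(0)=\lim_{t\to0^+}f(t)$, is concave. Then $$\eta_{\chi^2}(P_X,P_{Y|X})\le\eta_f(P_X,P_{Y|X})\le \frac{f'(1)+f(0)}{f''(1)\min_{x\in\mathcal{X}}P_X(x)}\,\eta_{\chi^2}(P_X,P_{Y|X}).$$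
   Context: Let $W$ be the column stochastic matrix of the channel $P_{Y|X}$ (its $x$th column is $P_{Y|X=x}$), mapping a pmf $R_X$ on $\mathcal{X}$ to $WR_X$. Strict convexity at $1$ means $\lambda f(x)+(1-\lambda)f(y)>f(1)$ whenever $\lambda\in(0,1)$, $x,y>0$, $\lambda x+(1-\lambda)y=1$. The $f$-divergence is $D_f(R_X\|P_X)=\sum_x P_X(x)f(R_X(x)/P_X(x))$ with conventions $f(0)=\lim_{t\to0^+}f(t)$, $0f(0/0)=0$, $0f(r/0)=r\lim_{p\to0^+}pf(1/p)$ for $r>0$. The $\chi^2$-divergence is $\chi^2(R_X\|P_X)=\sum_x (R_X(x)-P_X(x))^2/P_X(x)$ (the case $f(t)=t^2-1$). The contraction coefficient is $\eta_f(P_X,P_{Y|X})=\sup\{D_f(WR_X\|WP_X)/D_f(R_X\|P_X): R_X \text{ a pmf on } \mathcal{X},\ 0<D_f(R_X\|P_X)<\infty\}$, and $\eta_{\chi^2}$ is this coefficient for the $\chi^2$-divergence. *)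

From HB Require Import structures.
From mathcomp Require Import all_boot all_order all_algebra.
From mathcomp Require Import all_classical all_reals all_analysis.
Set Implicit Arguments. Unset Strict Implicit. Unset Printing Implicit Defensive.
Import Order.TTheory GRing.Theory Num.Theory.
Import numFieldNormedType.Exports.
Local Open Scope classical_set_scope.
Local Open Scope ring_scope.

Section Defs.
Variable R : realType.

Definition is_pmf (T : finType) (p : T -> R) : Prop :=
  (forall t, 0 <= p t) /\ \sum_(t : T) p t = 1.

Definition is_joint_pmf (X Y : finType) (PXY : X -> Y -> R) : Prop :=
  (forall x y, 0 <= PXY x y) /\ \sum_(x : X) \sum_(y : Y) PXY x y = 1.

Definition marginalX (X Y : finType) (PXY : X -> Y -> R) (x : X) : R :=
  \sum_(y : Y) PXY x y.
Definition marginalY (X Y : finType) (PXY : X -> Y -> R) (y : Y) : R :=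
  \sum_(x : X) PXY x y.

(* column-stochastic channel matrix W y x = P_{Y|X}(y|x) *)
Definition channel (X Y : finType) (PXY : X -> Y -> R) (y : Y) (x : X) : R :=
  PXY x y / marginalX PXY x.

Definition push (X Y : finType) (W : Y -> X -> R) (r : X -> R) (y : Y) : R :=
  \sum_(x : X) W y x * r x.

(* f-divergence D_f(r || p), with f(0) := f0 (the right limit at 0).
   Used only with p > 0 everywhere; the term for p t = 0, r t = 0 is 0. *)
Definition fdiv (f : R -> R) (f0 : R) (T : finType) (r p : T -> R) : R :=
  \sum_(t : T) p t * (if r t == 0 then f0 else f (r t / p t)).

Definition chi2div (T : finType) (r p : T -> R) : R :=
  \sum_(t : T) (r t - p t) ^+ 2 / p t.

Definition contr_coef (X Y : finType)
  (DX : (X -> R) -> (X -> R) -> R) (DY : (Y -> R) -> (Y -> R) -> R)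
  (PX : X -> R) (W : Y -> X -> R) : \bar R :=
  ereal_sup [set ((DY (push W r) (push W PX)) / (DX r PX))%:E
            | r in [set r : X -> R | is_pmf r /\ 0 < DX r PX]].

(* min_x p x ; the neutral element 1 is harmless for pmfs (all values <= 1) *)
Definition minval (T : finType) (p : T -> R) : R := \big[Num.min/1]_(t : T) p t.

Definition convex_pos (f : R -> R) : Prop :=
  forall x y (l : R), 0 < x -> 0 < y -> 0 <= l <= 1 ->
    f (l * x + (1 - l) * y) <= l * f x + (1 - l) * f y.

Definition concave_pos (g : R -> R) : Prop :=
  forall x y (l : R), 0 < x -> 0 < y -> 0 <= l <= 1 ->
    l * g x + (1 - l) * g y <= g (l * x + (1 - l) * y).

Definition strictly_convex_at1 (f : R -> R) : Prop :=
  forall (l x y : R), 0 < l < 1 -> 0 < x -> 0 < y -> l * x + (1 - l) * y = 1 ->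
    f 1 < l * f x + (1 - l) * f y.

Definition thrice_diff_at1 (f : R -> R) : Prop :=
  (\forall x \near (1 : R), derivable f x 1 /\ derivable (derive1n 1 f) x 1)
  /\ derivable (derive1n 2 f) 1 1.

End Defs.

From HB Require Import structures.
From mathcomp Require Import all_boot all_order all_algebra.
From mathcomp Require Import all_classical all_reals all_analysis.
From mathcomp Require Import ring lra.
Set Implicit Arguments. Unset Strict Implicit. Unset Printing Implicit Defensive.
Import Order.TTheory GRing.Theory Num.Theory.
Import numFieldNormedType.Exports.
Local Open Scope classical_set_scope.
Local Open Scope ring_scope.

(* Write k = f''(1)/2 and c = f'(1) + f(0).  Concavity of (f - f(0))/x, compared with its
   tangent at 1, gives f(t) <= f(0)(1 - t) + c t(t - 1), hence D_f <= c chi^2 between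
   pmfs.  Conversely the hypothesis says that f(t) - f'(1)(t - 1), multiplied by the weight
   w(t) = 1 - f'''(1)/(3 f''(1)) (t - 1) whose P-average is 1, dominates k (t - 1)^2, so by
   AM-GM D_f(R||P) >= k (sum |R - P|)^2 >= 2 k (min P) chi^2(R||P); comparing ratios gives
   the upper bound.  For the lower bound, mix R into P_X: for R_e = (1 - e) P_X + e R and e
   small, Taylor's formula at 1 bounds D_f(R_e||P_X) above by (k + eta) chi^2(R_e||P_X), and
   the weighted minorant bounds D_f(W R_e||W P_X) below by k/(1 + eta) chi^2(W R_e||W P_X),
   while both chi^2 terms scale like e^2; so each chi^2 ratio is approached by f-ratios. *)

Section Calculus.
Variable R : realType.

Lemma derive1_difference_quotient (f : R -> R) (x : R) : derivable f x 1 ->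
  forall e, 0 < e -> exists2 d, 0 < d &
    forall h, h != 0 -> `|h| < d -> `|h^-1 * (f (h + x) - f x) - derive1 f x| < e.
Proof.
move=> /cvgrPdist_lt df e e0.
have /nbhs_ballP [d /= d0 Hd] := df e e0.
exists d => // h h0 hd.
have := Hd h; rewrite /ball /= sub0r normrN => /(_ hd h0).
by rewrite derive1E /derive distrC /= [h%:A]mulr1.
Qed.

Lemma convex_pos_tangent (h : R -> R) (x0 : R) : 0 < x0 -> convex_pos h ->
  derivable h x0 1 -> forall t, 0 < t -> h x0 + derive1 h x0 * (t - x0) <= h t.
Proof.
move=> x0_gt0 cvx dh t t_gt0.
have [->|tx] := eqVneq t x0; first by rewrite subrr mulr0 addr0.
set L := derive1 h x0; set m := `|t - x0|.
have m0 : 0 < m by rewrite normr_gt0 subr_eq0.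
apply/ler_addgt0Pr => e e0.
have [d d0 Hd] := derive1_difference_quotient dh (divr_gt0 e0 m0).
(* the secant from x0 to x0 + s (t - x0) has slope at most that of the chord to t *)
set s := Num.min (1/2) (d / (2 * m)).
have s0 : 0 < s by rewrite lt_min; apply/andP; split; [lra | rewrite divr_gt0 //; lra].
have s12 : s <= 1/2 by rewrite ge_min lexx.
have sd : s * m < d.
  have : s * m <= d / (2 * m) * m by rewrite ler_pM2r // ge_min lexx orbT.
  rewrite (_ : d / (2 * m) * m = d / 2); first lra.
  by field; rewrite gt_eqF.
set u := s * (t - x0).
have nu : `|u| = s * m by rewrite normrM gtr0_norm.
have u0 : u != 0 by rewrite -normr_gt0 nu mulr_gt0.
have ud : `|u| < d by rewrite nu.
have := Hd u u0 ud.
set Q := u^-1 * (h (u + x0) - h x0) => HQ.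
have secant : h (u + x0) - h x0 = Q * u by rewrite /Q mulrAC mulVf // mul1r.
have chord : h (u + x0) <= s * h t + (1 - s) * h x0.
  rewrite (_ : u + x0 = s * t + (1 - s) * x0); last by rewrite /u; ring.
  by apply: cvx => //; apply/andP; split; lra.
have err : `|(Q - L) * u| <= e * s.
  rewrite normrM nu (_ : e * s = e / m * (s * m)); last by field; rewrite gt_eqF.
  by rewrite ler_pM2r ?mulr_gt0 // ltW.
have : 0 <= s * (h t - (h x0 + L * (t - x0)) + e).
  move: err; rewrite ler_norml => /andP[err _].
  have : Q * u <= s * (h t - h x0) by rewrite -secant; lra.
  rewrite /u in err *; nra.
rewrite pmulr_rge0 //; lra.
Qed.

Lemma le_of_derive_sign (psi dpsi : R -> R) (x0 d : R) :
  (forall y, `|y - x0| < d -> is_derive y 1 psi (dpsi y)) ->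
  (forall y, `|y - x0| < d -> dpsi y * (y - x0) <= 0) ->
  forall y, `|y - x0| < d -> psi y <= psi x0.
Proof.
move=> der sgn y yd.
have x0d : `|x0 - x0| < d by rewrite subrr normr0 (le_lt_trans (normr_ge0 _) yd).
have between a b z : `|a - x0| < d -> `|b - x0| < d -> a <= z <= b -> `|z - x0| < d.
  by rewrite !ltr_norml => /andP[? ?] /andP[? ?] /andP[? ?]; apply/andP; split; lra.
have mvt a b : a < b -> `|a - x0| < d -> `|b - x0| < d ->
    exists2 c, `|c - x0| < d /\ a < c < b & psi b - psi a = dpsi c * (b - a).
  move=> ab ad bd.
  have [z|c|c] := MVT (f := psi) (df := dpsi) ab.
  - by rewrite in_itv /= => /andP[? ?]; apply: der; apply: (between a b) => //; lra.
  - apply: derivable_within_continuous => z; rewrite in_itv /= => zab.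
    by case: (der z (between a b z ad bd zab)).
  rewrite in_itv /= => /andP[ac cb] E; exists c => //; split; last lra.
  by apply: (between a b) => //; lra.
have [yx|xy|-> //] := ltgtP y x0.
- have [c [cd /andP[yc cx]] E] := mvt y x0 yx yd x0d.
  have : 0 <= dpsi c by rewrite -(nmulr_lle0 _ (_ : c - x0 < 0)) ?sgn ?subr_lt0.
  by move=> ?; rewrite -subr_ge0 E mulr_ge0 // subr_ge0 ltW.
- have [c [cd /andP[xc cy]] E] := mvt x0 y xy x0d yd.
  have : dpsi c <= 0 by rewrite -(pmulr_lle0 _ (_ : 0 < c - x0)) ?sgn ?subr_gt0.
  by move=> ?; rewrite -subr_ge0 -opprB E -mulNr mulr_ge0 ?oppr_ge0 // subr_ge0 ltW.
Qed.

Lemma is_derive_quadratic (a c x0 y : R) :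
  is_derive y 1 (fun z => a * (z - x0) + c * (z - x0) ^+ 2) (a + c * (2 * (y - x0))).
Proof.
have : is_derive y 1 (a *: (id - cst x0) + c *: (id - cst x0) ^+ 2) (a + c * (2 * (y - x0))).
  by apply: is_derive_eq; rewrite (_ : (id - cst x0) y = y - x0) // /GRing.scale /=; ring.
by [].
Qed.

Lemma taylor2_le (f : R -> R) (x0 : R) :
  (\forall x \near x0, derivable f x 1) -> derivable (derive1 f) x0 1 ->
  forall eta, 0 < eta -> exists2 d, 0 < d & forall h, `|h| < d ->
    f (x0 + h) - f x0 - derive1 f x0 * h <= (derive1 (derive1 f) x0 / 2 + eta) * h ^+ 2.
Proof.
move=> /nbhs_ballP [d1 d1_gt0 df] ddf eta eta0.
have eta2 : 0 < 2 * eta by lra.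
have [d2 d2_gt0 quot] := derive1_difference_quotient ddf eta2.
exists (Num.min d1 d2); first by rewrite lt_min d1_gt0 d2_gt0.
set D1 := derive1 f x0; set D2 := derive1 (derive1 f) x0; set c := D2 / 2 + eta.
pose psi y := f y - (D1 * (y - x0) + c * (y - x0) ^+ 2).
pose dpsi y := derive1 f y - (D1 + c * (2 * (y - x0))).
have der y : `|y - x0| < Num.min d1 d2 -> is_derive y 1 psi (dpsi y).
  rewrite lt_min => /andP[yd1 _].
  have /derivableP dfy : derivable f y 1 by apply: df; rewrite /ball /= distrC.
  by rewrite /dpsi derive1E; exact: is_deriveB dfy (is_derive_quadratic _ _ _ _).
have sgn y : `|y - x0| < Num.min d1 d2 -> dpsi y * (y - x0) <= 0.
  rewrite lt_min => /andP[_ yd2].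
  have [->|yx] := eqVneq (y - x0) 0; first by rewrite mulr0.
  have := quot _ yx yd2; rewrite subrK -/D1 -/D2.
  set q := (y - x0)^-1 * (derive1 f y - D1) => Hq.
  have -> : dpsi y = (q - D2 - 2 * eta) * (y - x0) by rewrite /dpsi /q /c; field.
  have : q - D2 < 2 * eta by move: Hq; rewrite ltr_norml => /andP[].
  by move=> ?; rewrite -mulrA mulr_le0_ge0 -?expr2 ?sqr_ge0 //; lra.
move=> h hd; have := le_of_derive_sign der sgn (_ : `|x0 + h - x0| < _).
by rewrite /psi (addrC x0) addrK subrr expr0n /= !mulr0 addr0 subr0 => /(_ hd); lra.
Qed.

Lemma le_at0_of_minorant (f : R -> R) (f0 d1 a k : R) :
  f x @[x --> 0^'+] --> f0 ->
  (forall t, 0 < t -> k * (t - 1) ^+ 2 <= (f t - d1 * (t - 1)) * (1 - a * (t - 1))) ->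
  k <= (f0 + d1) * (1 + a).
Proof.
move=> f_f0 minor.
have id0 : (fun t : R => t) x @[x --> 0^'+] --> (0 : R).
  by apply: cvg_at_right_filter; exact: cvg_id.
have lhs : (fun t : R => k * ((t - 1) * (t - 1))) x @[x --> 0^'+] --> k * ((0 - 1) * (0 - 1)).
  by apply: cvgM; [exact: cvg_cst | apply: cvgM; apply: cvgB => //; exact: cvg_cst].
have rhs : (fun t => (f t - d1 * (t - 1)) * (1 - a * (t - 1))) x @[x --> 0^'+] -->
    (f0 - d1 * (0 - 1)) * (1 - a * (0 - 1)).
  by apply: cvgM; apply: cvgB => //; try exact: cvg_cst;
    apply: cvgM; try exact: cvg_cst; apply: cvgB => //; exact: cvg_cst.
have := ler_cvg_to lhs rhs; rewrite sub0r mulrNN !mulr1 !mulrN1 !opprK; apply.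
by near=> t; rewrite -expr2; apply: minor; near: t; exact: nbhs_right_gt.
Unshelve. all: by end_near.
Qed.

Lemma concave_quotient_majorant (f : R -> R) (f0 : R) : derivable f 1 1 -> f 1 = 0 ->
  concave_pos (fun x => (f x - f0) / x) ->
  forall t, 0 < t -> f t <= f0 * (1 - t) + (derive1 f 1 + f0) * (t * (t - 1)).
Proof.
move=> /derivableP df f1 ccv t t0.
pose h x := - ((f x - f0) / x).
have cvx : convex_pos h.
  by move=> x y l x0 y0 l01; have := ccv x y l x0 y0 l01; rewrite /h; lra.
have dh : is_derive (1 : R) 1 h (- (derive1 f 1 + f0)).
  have := is_deriveM (is_deriveB df (is_derive_cst f0 (1 : R) 1))
                     (is_deriveV (oner_neq0 R) (is_derive_id (1 : R) 1)).
  move=> /is_deriveN dq; apply: is_derive_eq.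
  rewrite (_ : (f - cst f0) 1 = f 1 - f0) // f1 derive1E /GRing.scale /=.
  by rewrite mulr1 subr0 expr1n invr1; ring.
have dh1 : derivable h 1 1 by case: dh.
have := convex_pos_tangent ltr01 cvx dh1 t0.
rewrite derive1E (@derive_val _ _ _ _ _ _ _ dh) /h f1 sub0r divr1 opprK => tangent.
have : (f t - f0) / t <= - f0 + (derive1 f 1 + f0) * (t - 1) by lra.
rewrite ler_pdivrMr // => quot.
by rewrite (_ : _ + _ = f0 + (- f0 + (derive1 f 1 + f0) * (t - 1)) * t); [lra | ring].
Qed.

End Calculus.

Lemma amgm_abs (R : realType) (G W k x l : R) : 0 <= G -> 0 <= W -> 0 < k -> 0 < l ->
  k * x ^+ 2 <= G * W -> 2 * k * `|x| <= l * G + k / l * W.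
Proof.
move=> G0 W0 k0 l0 kGW.
set S := l * G + k / l * W.
have S2 : S ^+ 2 = (l * G - k / l * W) ^+ 2 + 4 * k * (G * W).
  by rewrite /S; field; rewrite gt_eqF.
have sq : (2 * k * `|x|) ^+ 2 <= S ^+ 2.
  rewrite S2 exprMn (real_normK (num_real x)).
  by have := sqr_ge0 (l * G - k / l * W); nra.
have S0 : 0 <= S by rewrite addr_ge0 // mulr_ge0 // ?divr_ge0 // ltW.
by move: sq; rewrite ler_pXn2r // nnegrE // mulr_ge0 // mulr_ge0 // ltW.
Qed.

Section FinitePmf.
Variables (R : realType) (T : finType).
Implicit Types (p r : T -> R).

Lemma minval_gt0 p : (forall t, 0 < p t) -> 0 < minval p.
Proof.
by move=> p_gt0; rewrite /minval; elim/big_ind: _ => // a b a0 b0; rewrite lt_min a0 b0.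
Qed.

Lemma minval_le p t : minval p <= p t.
Proof. by rewrite /minval (bigD1 t) //= ge_min lexx. Qed.

Lemma pmf_le1 p t : is_pmf p -> p t <= 1.
Proof. by move=> [p0 <-]; rewrite (bigD1 t) //= lerDl sumr_ge0. Qed.

Lemma pmf_dist_le1 r p t : is_pmf r -> is_pmf p -> `|r t - p t| <= 1.
Proof.
move=> rpmf ppmf; have := pmf_le1 t rpmf; have := pmf_le1 t ppmf.
have := rpmf.1 t; have := ppmf.1 t.
by rewrite ler_norml => *; apply/andP; split; lra.
Qed.

Lemma dist_le_half_sum r p t : \sum_s r s = \sum_s p s ->
  2 * `|r t - p t| <= \sum_s `|r s - p s|.
Proof.
move=> rp; rewrite (bigD1 t) //=.
have : \sum_s (r s - p s) = 0 by rewrite sumrB rp subrr.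
rewrite (bigD1 t) //= => /eqP; rewrite addr_eq0 => /eqP ->.
by rewrite normrN mulr2n mulrDl mul1r lerD2l ler_norm_sum.
Qed.

Lemma chi2div_le_tv r p : (forall t, 0 < p t) -> \sum_t r t = \sum_t p t ->
  2 * minval p * chi2div r p <= (\sum_t `|r t - p t|) ^+ 2.
Proof.
move=> p_gt0 rp; rewrite /chi2div mulr_sumr expr2 mulr_suml; apply: ler_sum => t _.
have := dist_le_half_sum t rp; have pt := p_gt0 t; have mt := minval_le p t.
set V := \sum_s _; set a := `|r t - p t| => aV.
have a0 : 0 <= a := normr_ge0 _.
rewrite -(real_normK (num_real (r t - p t))) -/a.
rewrite (_ : _ * (a ^+ 2 / p t) = minval p / p t * (2 * a) * a); last first.
  by rewrite expr2; field; rewrite gt_eqF.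
have : minval p / p t <= 1 by rewrite ler_pdivrMr // mul1r.
have : 0 <= minval p / p t by rewrite divr_ge0 // ltW // minval_gt0.
nra.
Qed.

Lemma sum_weighted_amgm (p u G W : T -> R) (k : R) : 0 < k ->
  (forall t, 0 <= p t) -> (forall t, 0 <= G t) -> (forall t, 0 <= W t) ->
  (forall t, k * u t ^+ 2 <= G t * W t) -> \sum_t p t * W t = 1 ->
  k * (\sum_t p t * `|u t|) ^+ 2 <= \sum_t p t * G t.
Proof.
move=> k0 p0 G0 W0 kGW W1.
set V := \sum_t _; set D := \sum_t _.
have D0 : 0 <= D by rewrite sumr_ge0 // => t _; rewrite mulr_ge0.
have amgm l : 0 < l -> 2 * k * V <= l * D + k / l.
  move=> l0; rewrite -[k / l]mulr1 -[X in _ + _ * X]W1 !mulr_sumr -big_split /=.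
  apply: ler_sum => t _; have := amgm_abs (G0 t) (W0 t) k0 l0 (kGW t).
  move=> /(ler_wpM2l (p0 t)); congr (_ <= _); ring.
have [->|V_neq0] := eqVneq V 0; first by rewrite expr0n /= mulr0.
have V_gt0 : 0 < V by rewrite lt_def V_neq0 sumr_ge0 // => t _; rewrite mulr_ge0.
(* the optimal weight l = 1 / V turns the AM-GM bound into k V^2 <= D *)
have Vi : 0 < V^-1 by rewrite invr_gt0.
have := amgm _ Vi; rewrite invrK => /(ler_wpM2r (ltW V_gt0)).
by rewrite (_ : (V^-1 * D + k * V) * V = D + k * V ^+ 2) ?expr2; [lra | field].
Qed.

Lemma chi2div_ge0 r p : (forall t, 0 < p t) -> 0 <= chi2div r p.
Proof. by move=> p_gt0; rewrite sumr_ge0 // => t _; rewrite divr_ge0 ?sqr_ge0 ?ltW. Qed.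

Definition mix (e : R) p r t := (1 - e) * p t + e * r t.

Lemma mix_pmf e p r : 0 <= e <= 1 -> is_pmf p -> is_pmf r -> is_pmf (mix e p r).
Proof.
move=> /andP[e0 e1] [p0 p1] [r0 r1]; split.
  by move=> t; rewrite addr_ge0 ?mulr_ge0 ?subr_ge0.
by rewrite big_split /= -!mulr_sumr p1 r1; ring.
Qed.

Lemma mix_gt0 e p r t : 0 <= e < 1 -> 0 < p t -> 0 <= r t -> 0 < mix e p r t.
Proof.
move=> /andP[e0 e1] pt rt; rewrite /mix.
by rewrite ltr_wpDr // ?mulr_ge0 // mulr_gt0 // subr_gt0.
Qed.

Lemma chi2div_mix e p r : chi2div (mix e p r) p = e ^+ 2 * chi2div r p.
Proof.
rewrite /chi2div mulr_sumr; apply: eq_bigr => t _.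
by rewrite /mix (_ : _ - p t = e * (r t - p t)) ?exprMn ?mulrA //; ring.
Qed.

Lemma mix_ratio_dist e p r t : 0 <= e -> is_pmf p -> is_pmf r -> (forall s, 0 < p s) ->
  `|mix e p r t / p t - 1| <= e / minval p.
Proof.
move=> e0 ppmf rpmf p_gt0; have pt := p_gt0 t; have m0 := minval_gt0 p_gt0.
rewrite (_ : _ - 1 = e * (r t - p t) / p t); last by rewrite /mix; field; rewrite gt_eqF.
rewrite normrM normfV normrM (ger0_norm e0) (gtr0_norm pt) ler_pdivrMr //.
have ratio1 : 1 <= p t / minval p by rewrite ler_pdivlMr // mul1r minval_le.
rewrite mulrAC -mulrA ler_wpM2l //; have := pmf_dist_le1 t rpmf ppmf; lra.
Qed.

End FinitePmf.

Section FDivergence.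
Variables (R : realType) (f : R -> R) (f0 : R) (T : finType).
Implicit Types (p r : T -> R).

Definition fdiv_tilted_term (d1 : R) r p t :=
  (if r t == 0 then f0 else f (r t / p t)) - d1 * (r t / p t - 1).

(* Adding a multiple of [t - 1] to [f] does not change [D_f] between measures of equal mass. *)
Lemma fdiv_tilted d1 r p : (forall t, 0 < p t) -> \sum_t r t = \sum_t p t ->
  fdiv f f0 r p = \sum_t p t * fdiv_tilted_term d1 r p t.
Proof.
move=> p_gt0 rp; rewrite /fdiv_tilted_term.
have tilt t : p t * (d1 * (r t / p t - 1)) = d1 * (r t - p t).
  by field; rewrite gt_eqF.
under [RHS]eq_bigr => t _ do rewrite mulrBr tilt.
by rewrite sumrB -mulr_sumr sumrB rp subrr mulr0 subr0.
Qed.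

Lemma fdiv_le_chi2 c r p :
  (forall t, 0 < t -> f t <= f0 * (1 - t) + c * (t * (t - 1))) ->
  (forall t, 0 < p t) -> (forall t, 0 <= r t) -> \sum_t r t = \sum_t p t ->
  fdiv f f0 r p <= c * chi2div r p.
Proof.
move=> major p_gt0 r0 rp.
apply: (@le_trans _ _
  (\sum_t (f0 * (p t - r t) + c * ((r t - p t) ^+ 2 / p t) + c * (r t - p t)))).
  apply: ler_sum => t _; have pt := p_gt0 t.
  have [rt0|rt_neq0] := eqVneq (r t) 0.
    rewrite rt0 subr0 sub0r sqrrN mulrN -addrA expr2 mulrK ?unitfE ?gt_eqF //.
    by rewrite subrr addr0 mulrC.
  have rt_gt0 : 0 < r t / p t by rewrite divr_gt0 // lt_def rt_neq0 r0.
  have := ler_wpM2l (ltW pt) (major _ rt_gt0).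
  rewrite (_ : p t * (f0 * _ + _) = f0 * (p t - r t) + c * ((r t - p t) ^+ 2 / p t)
    + c * (r t - p t)) //.
  by rewrite expr2; field; rewrite gt_eqF.
by rewrite !big_split /= -!mulr_sumr !sumrB rp !subrr !mulr0 add0r addr0.
Qed.

Lemma fdiv_le_chi2_near d1 K del r p :
  (forall h, `|h| < del -> f (1 + h) - d1 * h <= K * h ^+ 2) ->
  (forall t, 0 < p t) -> (forall t, 0 < r t) -> (forall t, `|r t / p t - 1| < del) ->
  \sum_t r t = \sum_t p t -> fdiv f f0 r p <= K * chi2div r p.
Proof.
move=> taylor p_gt0 r_gt0 near1 rp.
rewrite (fdiv_tilted d1 p_gt0 rp) /chi2div mulr_sumr; apply: ler_sum => t _.
have pt := p_gt0 t; rewrite /fdiv_tilted_term (gt_eqF (r_gt0 t)).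
have := ler_wpM2l (ltW pt) (taylor _ (near1 t)); rewrite (addrC 1) subrK.
by rewrite (_ : p t * (K * _) = K * ((r t - p t) ^+ 2 / p t)) //; field; rewrite gt_eqF.
Qed.

Section Minorant.
Variables (d1 k a : R).
Hypothesis k_gt0 : 0 < k.
Hypothesis f_ge_tangent : forall t, 0 < t -> d1 * (t - 1) <= f t.
Hypothesis f_minorant : forall t, 0 < t ->
  k * (t - 1) ^+ 2 <= (f t - d1 * (t - 1)) * (1 - a * (t - 1)).
Hypothesis f_lim0 : f x @[x --> 0^'+] --> f0.

Lemma tangent_at0 : 0 <= f0 + d1.
Proof.
have := @le_at0_of_minorant _ f f0 d1 0 0 f_lim0; rewrite addr0 mulr1; apply => t t0.
by rewrite mul0r mul0r subr0 mulr1 subr_ge0 f_ge_tangent.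
Qed.

Lemma minorant_at0 : k <= (f0 + d1) * (1 + a).
Proof. exact: le_at0_of_minorant f_lim0 f_minorant. Qed.

Lemma fdiv_tilted_term_minorant r p t : 0 < p t -> 0 <= r t ->
  [/\ 0 <= fdiv_tilted_term d1 r p t, 0 <= 1 - a * (r t / p t - 1) &
      k * (r t / p t - 1) ^+ 2 <= fdiv_tilted_term d1 r p t * (1 - a * (r t / p t - 1))].
Proof.
move=> pt rt; rewrite /fdiv_tilted_term.
have [->|rt_neq0] := eqVneq (r t) 0.
  rewrite mul0r sub0r !mulrN1 !opprK sqrrN expr1n mulr1.
  have := minorant_at0; have := tangent_at0 => fd1 kfa.
  by have := k_gt0; split => //; nra.
have t_gt0 : 0 < r t / p t by rewrite divr_gt0 // lt_def rt_neq0.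
have G0 : 0 <= f (r t / p t) - d1 * (r t / p t - 1) by rewrite subr_ge0; exact: f_ge_tangent.
split => //; last exact: f_minorant.
have := f_minorant t_gt0.
have [->|t1] := eqVneq (r t / p t - 1) 0; first by rewrite !mulr0 !subr0 => _; exact: ler01.
have : 0 < k * (r t / p t - 1) ^+ 2 by rewrite mulr_gt0 // exprn_even_gt0.
nra.
Qed.

Lemma fdiv_ge_tv2 r p : is_pmf r -> is_pmf p -> (forall t, 0 < p t) ->
  k * (\sum_t `|r t - p t|) ^+ 2 <= fdiv f f0 r p.
Proof.
move=> [r0 r1] [_ p1] p_gt0; have rp : \sum_t r t = \sum_t p t by rewrite r1 p1.
rewrite (fdiv_tilted d1 p_gt0 rp).
have dist t : `|r t - p t| = p t * `|r t / p t - 1|.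
  rewrite -(gtr0_norm (p_gt0 t)) -normrM (gtr0_norm (p_gt0 t)).
  by congr `|_|; field; rewrite gt_eqF.
under eq_bigr => t _ do rewrite dist.
have bnd t := fdiv_tilted_term_minorant (p_gt0 t) (r0 t).
apply: (sum_weighted_amgm (W := fun t => 1 - a * (r t / p t - 1))) => //.
- by move=> t; exact: ltW.
- by move=> t; case: (bnd t).
- by move=> t; case: (bnd t).
- by move=> t; case: (bnd t).
have tilt t : p t * (a * (r t / p t - 1)) = a * (r t - p t).
  by field; rewrite gt_eqF.
under eq_bigr => t _ do rewrite mulrBr mulr1 tilt.
by rewrite sumrB -mulr_sumr sumrB rp subrr mulr0 subr0.
Qed.

Lemma fdiv_ge_minval_chi2 r p : is_pmf r -> is_pmf p -> (forall t, 0 < p t) ->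
  2 * k * minval p * chi2div r p <= fdiv f f0 r p.
Proof.
move=> rpmf ppmf p_gt0; apply: le_trans (fdiv_ge_tv2 rpmf ppmf p_gt0).
have rp : \sum_t r t = \sum_t p t by rewrite rpmf.2 ppmf.2.
rewrite (_ : 2 * k * _ * _ = k * (2 * minval p * chi2div r p)); last ring.
by rewrite ler_pM2l // chi2div_le_tv.
Qed.

Lemma fdiv_ge_chi2_near eta r p :
  (forall t, 0 < p t) -> (forall t, 0 < r t) -> (forall t, `|a * (r t / p t - 1)| <= eta) ->
  \sum_t r t = \sum_t p t -> k * chi2div r p <= (1 + eta) * fdiv f f0 r p.
Proof.
move=> p_gt0 r_gt0 near1 rp.
rewrite (fdiv_tilted d1 p_gt0 rp) /chi2div !mulr_sumr; apply: ler_sum => t _.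
have pt := p_gt0 t.
have [G0 _ kGW] := fdiv_tilted_term_minorant pt (ltW (r_gt0 t)).
have : k * (r t / p t - 1) ^+ 2 <= (1 + eta) * fdiv_tilted_term d1 r p t.
  by move: (near1 t); rewrite ler_norml => /andP[? ?]; nra.
have chi : p t * (k * (r t / p t - 1) ^+ 2) = k * ((r t - p t) ^+ 2 / p t).
  by field; rewrite gt_eqF.
by move=> /(ler_wpM2l (ltW pt)); rewrite chi [X in _ <= X]mulrCA.
Qed.

End Minorant.
End FDivergence.

Section Channel.
Variables (R : realType) (X Y : finType) (PXY : X -> Y -> R).
Hypothesis PXY_ge0 : forall x y, 0 <= PXY x y.
Hypothesis PX_gt0 : forall x, 0 < marginalX PXY x.

Lemma push_channel_sum (r : X -> R) : \sum_y push (channel PXY) r y = \sum_x r x.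
Proof.
rewrite /push exchange_big /=; apply: eq_bigr => x _.
have := PX_gt0 x; rewrite /marginalX => mx.
by rewrite -mulr_suml /channel -mulr_suml /marginalX divff ?mul1r // gt_eqF.
Qed.

Lemma push_channel_marginal : push (channel PXY) (marginalX PXY) = marginalY PXY.
Proof.
apply/funext => y; rewrite /push /marginalY; apply: eq_bigr => x _.
by rewrite /channel divfK // gt_eqF.
Qed.

Lemma push_channel_pmf (r : X -> R) : is_pmf r -> is_pmf (push (channel PXY) r).
Proof.
move=> [r0 r1]; split; last by rewrite push_channel_sum.
by move=> y; rewrite sumr_ge0 // => x _; rewrite mulr_ge0 // divr_ge0 // ltW.
Qed.

End Channel.

Lemma marginalX_pmf (R : realType) (X Y : finType) (PXY : X -> Y -> R) :
  is_joint_pmf PXY -> is_pmf (marginalX PXY).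
Proof. by move=> [PXY0 PXY1]; split => // x; rewrite sumr_ge0. Qed.

Lemma push_mix (R : realType) (X Y : finType) (W : Y -> X -> R) e (p r : X -> R) :
  push W (mix e p r) = mix e (push W p) (push W r).
Proof.
apply/funext => y; rewrite /push /mix !mulr_sumr -big_split /=.
by apply: eq_bigr => x _; ring.
Qed.

Section ContractionCoefficient.
Variables (R : realType) (X Y : finType).
Variables (DX CX : (X -> R) -> (X -> R) -> R) (DY CY : (Y -> R) -> (Y -> R) -> R).
Variables (PX : X -> R) (W : Y -> X -> R).

Lemma contr_coef_le_mul (m c : R) : 0 < m -> 0 <= c ->
  (forall r, is_pmf r -> m * CX r PX <= DX r PX) ->
  (forall r, is_pmf r -> DX r PX <= c * CX r PX) ->
  (forall r, is_pmf r -> 0 <= CY (push W r) (push W PX)) ->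
  (forall r, is_pmf r -> DY (push W r) (push W PX) <= c * CY (push W r) (push W PX)) ->
  (contr_coef DX DY PX W <= (c / m)%:E * contr_coef CX CY PX W)%E.
Proof.
move=> m0 c0 DX_ge DX_le CY0 DY_le.
apply: ge_ereal_sup => _ [r [rpmf DX0] <-].
have CX0 : 0 < CX r PX by have := lt_le_trans DX0 (DX_le r rpmf); nra.
have : [set (CY (push W s) (push W PX) / CX s PX)%:E
          | s in [set s | is_pmf s /\ 0 < CX s PX]] ((CY (push W r) (push W PX) / CX r PX)%:E).
  by exists r.
have cm0 : (0 <= (c / m)%:E)%E by rewrite lee_fin divr_ge0 // ltW.
move=> /ereal_sup_ubound /(lee_wpmul2l cm0) sup; apply: le_trans sup.
rewrite -EFinM lee_fin ler_pdivrMr //; apply: le_trans (DY_le r rpmf) _.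
rewrite (_ : c / m * _ * _ = c * CY (push W r) (push W PX) * (DX r PX / (m * CX r PX))).
  by rewrite ler_peMr ?mulr_ge0 ?CY0 // ler_pdivlMr ?mul1r ?mulr_gt0 ?DX_ge.
by field; rewrite !gt_eqF.
Qed.

Lemma contr_coef_le_approx :
  (forall r, is_pmf r -> 0 < CX r PX -> forall e, 0 < e ->
     exists2 s, is_pmf s /\ 0 < DX s PX &
     CY (push W r) (push W PX) / CX r PX <= DY (push W s) (push W PX) / DX s PX + e) ->
  (contr_coef CX CY PX W <= contr_coef DX DY PX W)%E.
Proof.
move=> approx; apply: ge_ereal_sup => _ [r [rpmf CX0] <-].
apply/lee_addgt0Pr => e e0; have [s sDX le_e] := approx r rpmf CX0 e e0.
have : [set (DY (push W s') (push W PX) / DX s' PX)%:E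
          | s' in [set s' | is_pmf s' /\ 0 < DX s' PX]] ((DY (push W s) (push W PX) / DX s PX)%:E).
  by exists s.
move=> /ereal_sup_ubound /(leeD2r e%:E) sup; apply: le_trans sup.
by rewrite -EFinD lee_fin.
Qed.

End ContractionCoefficient.

Lemma ratio_le_add (R : realType) (k A B DX DY eta e s : R) :
  0 < k -> 0 < A -> 0 <= B -> 0 < s -> 0 < eta -> eta <= 1 -> 0 < e ->
  eta * (B / A + 1) * (k + 2) <= e * k -> 0 < DX ->
  DX <= (k + eta) * (s * A) -> k * (s * B) <= (1 + eta) * DY ->
  B / A <= DY / DX + e.
Proof.
move=> k0 A0 B0 s0 eta0 eta1 e0 small DX0 DXup DYlow.
set b := B / A; set v := DY / DX.
have b0 : 0 <= b by rewrite divr_ge0 // ltW.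
have DY0 : 0 <= DY.
  have : 0 <= k * (s * B) by rewrite !mulr_ge0 // ltW.
  by move=> /le_trans /(_ DYlow); rewrite pmulr_rge0 //; lra.
have v0 : 0 <= v by rewrite divr_ge0 // ltW.
have kbv : k * b <= (1 + eta) * (k + eta) * v.
  rewrite -(ler_pM2l (mulr_gt0 s0 A0)).
  have -> : s * A * (k * b) = k * (s * B) by rewrite /b; field; rewrite gt_eqF.
  apply: le_trans DYlow _.
  rewrite (_ : s * A * _ = (1 + eta) * (v * ((k + eta) * (s * A)))); last ring.
  apply: ler_wpM2l; first lra.
  by rewrite (_ : DY = v * DX) ?ler_wpM2l // /v divfK // gt_eqF.
have : b * eta * (1 + k + eta) <= (1 + eta) * (k + eta) * e.
  have : b * eta * (1 + k + eta) <= eta * (b + 1) * (k + 2).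
    by rewrite [b * eta]mulrC -mulrA -mulrA ler_wpM2l ?ltW //; nra.
  move=> /le_trans; apply; apply: le_trans small _.
  by rewrite [X in _ <= X]mulrC ler_wpM2l ?ltW //; nra.
have p0 : 0 < (1 + eta) * (k + eta) by apply: mulr_gt0; lra.
by move=> ?; rewrite -(ler_pM2l p0); nra.
Qed.

Section Contraction.
Variables (R : realType) (X Y : finType) (PXY : X -> Y -> R) (f : R -> R) (f0 d1 d2 a : R).
Hypothesis PXY_pmf : is_joint_pmf PXY.
Hypothesis PX_gt0 : forall x, 0 < marginalX PXY x.
Hypothesis PY_gt0 : forall y, 0 < marginalY PXY y.
Hypothesis d2_gt0 : 0 < d2.
Hypothesis f_ge_tangent : forall t, 0 < t -> d1 * (t - 1) <= f t.
Hypothesis f_minorant : forall t, 0 < t ->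
  d2 / 2 * (t - 1) ^+ 2 <= (f t - d1 * (t - 1)) * (1 - a * (t - 1)).
Hypothesis f_majorant : forall t, 0 < t -> f t <= f0 * (1 - t) + (d1 + f0) * (t * (t - 1)).
Hypothesis f_taylor : forall eta, 0 < eta -> exists2 del, 0 < del &
  forall h, `|h| < del -> f (1 + h) - d1 * h <= (d2 / 2 + eta) * h ^+ 2.
Hypothesis f_lim0 : f x @[x --> 0^'+] --> f0.

Let PX := marginalX PXY.
Let W := channel PXY.
Let k := d2 / 2.

Let k_gt0 : 0 < k. Proof. by rewrite divr_gt0. Qed.
Let PX_pmf : is_pmf PX. Proof. exact: marginalX_pmf. Qed.
Let PXY_ge0 : forall x y, 0 <= PXY x y. Proof. by case: PXY_pmf. Qed.
Let push_pmf (r : X -> R) : is_pmf r -> is_pmf (push W r).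
Proof. exact: push_channel_pmf. Qed.
Let PY_pmf : is_pmf (push W PX). Proof. exact: push_pmf. Qed.
Let push_PX_gt0 y : 0 < push W PX y. Proof. by rewrite push_channel_marginal. Qed.
Let sum_eq (T : finType) (r p : T -> R) : is_pmf r -> is_pmf p -> \sum_t r t = \sum_t p t.
Proof. by move=> [_ ->] [_ ->]. Qed.

Lemma contr_coef_fdiv_le_chi2 :
  (contr_coef (@fdiv R f f0 X) (@fdiv R f f0 Y) PX W
    <= ((d1 + f0) / (d2 * minval PX))%:E * contr_coef (@chi2div R X) (@chi2div R Y) PX W)%E.
Proof.
apply: contr_coef_le_mul => [||r rpmf|r rpmf|r rpmf|r rpmf].
- by rewrite mulr_gt0 // minval_gt0.
- by rewrite addrC (tangent_at0 f_ge_tangent f_lim0).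
- have := fdiv_ge_minval_chi2 k_gt0 f_ge_tangent f_minorant f_lim0 rpmf PX_pmf PX_gt0.
  by rewrite /k [2 * _]mulrC divfK // pnatr_eq0.
- by apply: fdiv_le_chi2 => //; [case: rpmf | exact: sum_eq rpmf PX_pmf].
- exact: chi2div_ge0.
- apply: fdiv_le_chi2 => //; first by case: (push_pmf rpmf).
  exact: sum_eq (push_pmf rpmf) PY_pmf.
Qed.

Lemma fdiv_mix_bounds r eta : is_pmf r -> 0 < eta -> exists2 e, 0 < e < 1 &
  fdiv f f0 (mix e PX r) PX <= (k + eta) * chi2div (mix e PX r) PX /\
  k * chi2div (push W (mix e PX r)) (push W PX)
    <= (1 + eta) * fdiv f f0 (push W (mix e PX r)) (push W PX).
Proof.
move=> rpmf eta0; have [del del0 taylor] := f_taylor eta0.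
have mX0 := minval_gt0 PX_gt0; have mY0 := minval_gt0 push_PX_gt0.
have a0 : 0 < `|a| + 1 by rewrite ltr_pwDr ?normr_ge0.
(* [e] keeps the ratios [mix e PX r / PX] within the Taylor radius [del] of 1, and the weight
   errors [a (ratio - 1)] on the output side below [eta]. *)
set e := Num.min (1 / 2) (Num.min (del * minval PX / 2)
                                  (eta * minval (push W PX) / (2 * (`|a| + 1)))).
have e0 : 0 < e by rewrite !lt_min !divr_gt0 ?mulr_gt0.
have e1 : e < 1 by rewrite gt_min; apply/orP; left; lra.
have eX : e <= del * minval PX / 2 by rewrite /e !ge_min lexx orbT.
have eY : e <= eta * minval (push W PX) / (2 * (`|a| + 1)) by rewrite /e !ge_min lexx !orbT.
have e_le1 : 0 <= e <= 1 by rewrite !ltW.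
have e_lt1 : 0 <= e < 1 by rewrite ltW.
exists e; first by rewrite e0.
have [r0 _] := rpmf; have [pr0 _] := push_pmf rpmf.
split.
  apply: (fdiv_le_chi2_near f0 taylor PX_gt0).
  - by move=> t; apply: mix_gt0.
  - move=> t; apply: le_lt_trans (mix_ratio_dist t (ltW e0) PX_pmf rpmf PX_gt0) _.
    by rewrite ltr_pdivrMr //; move: eX; rewrite ler_pdivlMr //; nra.
  - exact: sum_eq (mix_pmf e_le1 PX_pmf rpmf) PX_pmf.
rewrite push_mix.
apply: (fdiv_ge_chi2_near k_gt0 f_ge_tangent f_minorant f_lim0).
- exact: push_PX_gt0.
- by move=> t; apply: mix_gt0.
- move=> t; rewrite normrM.
  have := mix_ratio_dist t (ltW e0) PY_pmf (push_pmf rpmf) push_PX_gt0.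
  move: eY; rewrite ler_pdivlMr ?mulr_gt0 // => eY dist.
  apply: le_trans (ler_wpM2l (normr_ge0 a) dist) _.
  by rewrite mulrA ler_pdivrMr //; nra.
- exact: sum_eq (mix_pmf e_le1 PY_pmf (push_pmf rpmf)) PY_pmf.
Qed.

Lemma chi2_ratio_approx r : is_pmf r -> 0 < chi2div r PX -> forall e, 0 < e ->
  exists2 s, is_pmf s /\ 0 < fdiv f f0 s PX &
  chi2div (push W r) (push W PX) / chi2div r PX
    <= fdiv f f0 (push W s) (push W PX) / fdiv f f0 s PX + e.
Proof.
move=> rpmf A0 e e0.
set A := chi2div r PX; set B := chi2div (push W r) (push W PX).
have B0 : 0 <= B := chi2div_ge0 _ push_PX_gt0.
have b1 : 0 < B / A + 1 by rewrite ltr_pwDr // divr_ge0 // ltW.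
set eta := Num.min 1 (e * k / ((B / A + 1) * (k + 2))).
have k2 : 0 < k + 2 by rewrite addr_gt0.
have eta0 : 0 < eta by rewrite lt_min ltr01 !divr_gt0 ?mulr_gt0.
have eta1 : eta <= 1 by rewrite ge_min lexx.
have eta_small : eta * (B / A + 1) * (k + 2) <= e * k.
  have : eta <= e * k / ((B / A + 1) * (k + 2)) by rewrite ge_min lexx orbT.
  by rewrite ler_pdivlMr ?mulr_gt0 // mulrA.
have [s /andP[s0 s1] [DXs DYs]] := fdiv_mix_bounds rpmf eta0.
have spmf : is_pmf (mix s PX r) by apply: mix_pmf => //; rewrite !ltW.
rewrite chi2div_mix -/A in DXs; rewrite push_mix chi2div_mix -/B -push_mix in DYs.
have DX0 : 0 < fdiv f f0 (mix s PX r) PX.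
  have := fdiv_ge_minval_chi2 k_gt0 f_ge_tangent f_minorant f_lim0 spmf PX_pmf PX_gt0.
  apply: lt_le_trans.
  by rewrite chi2div_mix -/A !mulr_gt0 ?minval_gt0 ?exprn_gt0.
exists (mix s PX r) => //.
exact: (ratio_le_add k_gt0 A0 B0 (exprn_gt0 2 s0) eta0 eta1 e0 eta_small DX0 DXs DYs).
Qed.

Lemma contr_coef_chi2_le_fdiv :
  (contr_coef (@chi2div R X) (@chi2div R Y) PX W
    <= contr_coef (@fdiv R f f0 X) (@fdiv R f f0 Y) PX W)%E.
Proof. exact: contr_coef_le_approx chi2_ratio_approx. Qed.

End Contraction.

Theorem theorem4 (R : realType) (X Y : finType) (PXY : X -> Y -> R)
  (f : R -> R) (f0 : R) :
  (2 <= #|X|)%N -> (2 <= #|Y|)%N ->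
  is_joint_pmf PXY ->
  (forall x, 0 < marginalX PXY x) -> (forall y, 0 < marginalY PXY y) ->
  convex_pos f -> strictly_convex_at1 f -> thrice_diff_at1 f ->
  f 1 = 0 -> 0 < derive1n 2 f 1 ->
  (forall t, 0 < t ->
     (f t - derive1n 1 f 1 * (t - 1))
       * (1 - derive1n 3 f 1 / (3 * derive1n 2 f 1) * (t - 1))
     >= derive1n 2 f 1 / 2 * (t - 1) ^+ 2) ->
  f x @[x --> 0^'+] --> f0 ->
  concave_pos (fun x => (f x - f0) / x) ->
  let PX := marginalX PXY in
  let W := channel PXY in
  let eta_chi2 := contr_coef (@chi2div R X) (@chi2div R Y) PX W in
  let eta_f := contr_coef (@fdiv R f f0 X) (@fdiv R f f0 Y) PX W in
  (eta_chi2 <= eta_f)%E /\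
  (eta_f <= ((derive1n 1 f 1 + f0) / (derive1n 2 f 1 * minval PX))%:E * eta_chi2)%E.
Proof.
move=> _ _ PXY_pmf PX_gt0 PY_gt0 cvx _ [df _] f1 d2_gt0 minorant f_lim0 g_concave.
have f_der : \forall x \near (1 : R), derivable f x 1 by apply: filterS df => x [].
have [df1 ddf1] : derivable f 1 1 /\ derivable (derive1 f) 1 1 := nbhs_singleton df.
have tangent t : 0 < t -> derive1 f 1 * (t - 1) <= f t.
  by move=> t0; have := convex_pos_tangent ltr01 cvx df1 t0; rewrite f1 add0r.
have taylor eta : 0 < eta -> exists2 del, 0 < del & forall h, `|h| < del ->
    f (1 + h) - derive1 f 1 * h <= (derive1 (derive1 f) 1 / 2 + eta) * h ^+ 2.
  move=> eta0; have [del del0 near1] := taylor2_le f_der ddf1 eta0.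
  by exists del => // h /near1; rewrite f1 subr0.
have majorant := concave_quotient_majorant df1 f1 g_concave.
split.
- exact: contr_coef_chi2_le_fdiv PXY_pmf PX_gt0 PY_gt0 d2_gt0 tangent minorant taylor f_lim0.
- exact: contr_coef_fdiv_le_chi2 PXY_pmf PX_gt0 PY_gt0 d2_gt0 tangent minorant majorant f_lim0.
Qed.
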